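(* Let $y(t)=e^{i\theta(t)}\in C$ be a solution of the spherical mean curvature flow $y'(t)=H^S(y(t))$ with $\theta(0)=\theta_0\neq\theta_{\min}$. Then for every $t$ in its interval of existence, $$\|A^S(y(t))\|^2<\frac{g(1+\delta)}{n(\cos g\theta_0+\delta)^2}\,e^{-2gnt}\,\|H^S(y(t))\|^2.$$
   Context: Let $M^n$ be a compact isoparametric hypersurface in the unit sphere $S^{n+1}\subset\mathbb{R}^{n+2}$ (constant principal curvatures) with $g$ distinct principal curvatures; then $g\in\{1,2,3,4,6\}$. Fix $x_0\in M$ and identify the 2-dimensional normal space $\nu_{x_0}M$ of $M$ in $\mathbb{R}^{n+2}$ with $\mathbb{C}$ so that the two focal submanifolds $M_+$, $M_-$ ($\dim M_+\le\dim M_-$) meet the normal circle at $1$ and $e^{i\pi/g}$ (the intersection points closest to $x_0$). The Weyl chamber is $C=\{re^{i\theta}:r>0,\ 0<\theta<\pi/g\}$. For $k=1,\dots,g$ let $\theta_k=k\pi/g-\pi/2$, $\alpha_k=e^{i\theta_k}$, and $m_k=m_1$ for $k$ odd, $m_k=m_2$ for $k$ even, where $(m_1,m_2)$, $m_1\le m_2$, is the multiplicity data of the principal curvatures; $m_1=m_2$ if $g$ is odd, and $(m_1+m_2)g=2n$. For $x\in C$, $M_x=\{p+\tilde\xi(p):p\in M\}$ where $\tilde\xi$ is the parallel normal field on $M$ with $\tilde\xi(x_0)=x-x_0$; it is an $n$-dimensional isoparametric submanifold of $\mathbb{R}^{n+2}$ lying in $S^{n+1}(|x|)$, with normal space $\nu_{x_0}M$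 at $x$, and $T_xM_x=\oplus_kE_k$, $\dim E_k=m_k$, with Euclidean shape operator $A_\xi|_{E_k}=\langle\xi,-\alpha_k/\langle x,\alpha_k\rangle\rangle\mathrm{Id}$ ($\langle\cdot,\cdot\rangle$ the real inner product on $\mathbb{C}=\mathbb{R}^2$). $H^E(x),A^E(x)$ denote mean curvature vector and shape operator of $M_x$ at $x$ in $\mathbb{R}^{n+2}$; $H^S(x),A^S(x)$ those of $M_x$ as a hypersurface of $S^{n+1}(|x|)$; $\|A\|^2$ is the sum of squared Hilbert–Schmidt norms over an orthonormal normal basis. Set $\delta=(m_2-m_1)/(m_2+m_1)$ if $g\ge2$ and $\delta=0$ if $g=1$, and let $\theta_{\min}\in(0,\pi/g)$ be defined by $\cos g\theta_{\min}=-\delta$. The spherical MCF of $M_{y(0)}$ is the family $M_{y(t)}$. *)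

From Stdlib Require Import Reals.
Open Scope R_scope.

(* Vectors of the normal plane nu_{x0}M, identified with C = R^2. *)
Definition vec := (R * R)%type.
Definition inner (u v : vec) : R := fst u * fst v + snd u * snd v.
Definition normsq (v : vec) : R := inner v v.
Definition vscale (c : R) (v : vec) : vec := (c * fst v, c * snd v).
(* multiplication by i *)
Definition rot (v : vec) : vec := (- snd v, fst v).
Definition expi (t : R) : vec := (cos t, sin t).

Definition mult (m1 m2 k : nat) : nat := if Nat.odd k then m1 else m2.
Definition theta_k (g k : nat) : R := INR k * PI / INR g - PI / 2.
Definition alpha (g k : nat) : vec := expi (theta_k g k).

(* unit normal of M_x inside the sphere S^{n+1}(|x|): i x / |x| *)
Definition nuS (x : vec) : vec := vscale (/ sqrt (normsq x)) (rot x).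

(* eigenvalue of A^S(x) = A_{nuS x} on E_k:  < nuS x , - alpha_k / <x, alpha_k> > *)
Definition lamS (g : nat) (x : vec) (k : nat) : R :=
  inner (nuS x) (vscale (- / inner x (alpha g k)) (alpha g k)).

(* sum over k = 1 .. g *)
Definition sumk (g : nat) (f : nat -> R) : R := sum_f_R0 (fun j => f (S j)) (g - 1).

(* ||A^S(x)||^2 : Hilbert-Schmidt norm, dim E_k = m_k *)
Definition normA2S (g m1 m2 : nat) (x : vec) : R :=
  sumk g (fun k => INR (mult m1 m2 k) * (lamS g x k) ^ 2).

Definition HS (g m1 m2 : nat) (x : vec) : vec :=
  vscale (sumk g (fun k => INR (mult m1 m2 k) * lamS g x k)) (nuS x).

Definition delta (g m1 m2 : nat) : R :=
  if (2 <=? g)%nat then (INR m2 - INR m1) / (INR m2 + INR m1) else 0.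

Definition iso_data (g m1 m2 n : nat) : Prop :=
  (g = 1 \/ g = 2 \/ g = 3 \/ g = 4 \/ g = 6)%nat /\
  (1 <= m1)%nat /\ (m1 <= m2)%nat /\
  (Nat.odd g = true -> m1 = m2) /\ ((m1 + m2) * g = 2 * n)%nat.

(** Along [y = e^{i theta}] the principal curvatures of [M_y] in the sphere are
    [- cot (theta - k pi / g)].  The cotangent sums
    [sum_{j=1..p} cot (x - j pi / p) = p cot (p x)] and
    [sum_{j=1..p} cot^2 (x - j pi / p) = p^2 / sin^2 (p x) - p] (for [p = 1, 2, 3]),
    applied to the indices of each parity, give
    [h sin (g theta) = - n (cos (g theta) + delta)] for the mean curvature [h] and
    [|A|^2 sin^2 (g theta) = n (g (1 + delta cos (g theta)) - sin^2 (g theta))].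
    The first makes [theta' = h] separable, with [(cos (g theta) + delta) e^{-g n t}]
    constant along the flow; the second gives
    [|A|^2 < g n (1 + delta) / sin^2 (g theta) = g (1 + delta) h^2 / (n (cos (g theta) + delta)^2)],
    and the conserved quantity turns the right-hand side into the stated one. *)

From Stdlib Require Import Reals Lra Lia Nsatz.
Open Scope R_scope.

(* [nsatz] leaves an unprovable goal open instead of failing; [solve] turns
   that into a failure, so that the backtracking below works. *)
Ltac polynomial_identity := cbn [pow] in *; solve [nsatz].

(* Clears the denominators of a rational identity; each denominator is nonzero
   because it is a polynomial multiple of a hypothesis [_ <> 0]. *)
Ltac rational_identity :=
  field_simplify_eq;
  [ polynomial_identity
  | repeat split; intro;
    match goal with H : _ <> 0 |- _ => apply H; polynomial_identity end ].

Lemma sin_3a x : sin (3 * x) = sin x * (3 - 4 * sin x ^ 2).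
Proof.
  replace (3 * x) with (2 * x + x) by ring.
  rewrite sin_plus, sin_2a, cos_2a_sin.
  pose proof (sin2_cos2 x) as E; unfold Rsqr in E. polynomial_identity.
Qed.

Lemma cos_3a x : cos (3 * x) = cos x * (4 * cos x ^ 2 - 3).
Proof.
  replace (3 * x) with (2 * x + x) by ring.
  rewrite cos_plus, sin_2a, cos_2a_cos.
  pose proof (sin2_cos2 x) as E; unfold Rsqr in E. polynomial_identity.
Qed.

Lemma cos_2PI3 : cos (2 * PI / 3) = - 1 / 2.
Proof.
  replace (2 * PI / 3) with (PI - PI / 3) by field.
  rewrite cos_minus, cos_PI, sin_PI, cos_PI3. field.
Qed.

Lemma sin_2PI3 : sin (2 * PI / 3) = sqrt 3 / 2.
Proof.
  replace (2 * PI / 3) with (PI - PI / 3) by field.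
  rewrite sin_minus, cos_PI, sin_PI, sin_PI3. field.
Qed.

Lemma sin_neq0_neg x : - PI < x < 0 -> sin x <> 0.
Proof. intros Hx. apply Rlt_not_eq, sin_lt_0_var; lra. Qed.

Lemma sin_neq0_pos x : 0 < x < PI -> sin x <> 0.
Proof. intros Hx. apply Rgt_not_eq, sin_gt_0; lra. Qed.

Lemma cos_PI2_plus x : cos (PI / 2 + x) = - sin x.
Proof. rewrite (sin_cos x), Ropp_involutive. reflexivity. Qed.

Lemma mul_in_0_PI g th : (0 < g)%nat -> 0 < th < PI / INR g -> 0 < INR g * th < PI.
Proof.
  intros Hg Hth. assert (HG : 0 < INR g) by (apply lt_0_INR; lia).
  split; [nra|]. apply (Rmult_lt_reg_r (/ INR g)); [apply Rinv_0_lt_compat; lra|].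
  replace (INR g * th * / INR g) with th by (field; lra). exact (proj2 Hth).
Qed.

Definition cot (x : R) : R := cos x / sin x.

Definition cot_sums (p : nat) : Prop :=
  forall x, 0 < x < PI / INR p ->
    sum_f_R0 (fun j => cot (x - INR (S j) * PI / INR p)) (p - 1)
      = INR p * cot (INR p * x) /\
    sum_f_R0 (fun j => cot (x - INR (S j) * PI / INR p) ^ 2) (p - 1)
      = INR p ^ 2 / sin (INR p * x) ^ 2 - INR p.

Lemma cot_sums_1 : cot_sums 1.
Proof.
  intros x Hx. cbn [sum_f_R0 Nat.sub INR] in *.
  replace (x - 1 * PI / 1) with (x - PI) by field.
  replace (PI / 1) with PI in Hx by field.
  assert (s0 : sin (x - PI) <> 0) by (apply sin_neq0_neg; lra).
  assert (s : sin x <> 0) by (apply sin_neq0_pos; lra).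
  unfold cot. rewrite !Rmult_1_l.
  rewrite sin_minus, cos_minus, cos_PI, sin_PI in *.
  pose proof (sin2_cos2 x) as E; unfold Rsqr in E.
  split; rational_identity.
Qed.

Lemma cot_sums_2 : cot_sums 2.
Proof.
  intros x Hx. cbn [sum_f_R0 Nat.sub INR] in *.
  replace (1 + 1) with 2 in * by ring.
  replace (x - 1 * PI / 2) with (x - PI / 2) by field.
  replace (x - 2 * PI / 2) with (x - PI) by field.
  pose proof PI_RGT_0.
  assert (s1 : sin (x - PI / 2) <> 0) by (apply sin_neq0_neg; lra).
  assert (s2 : sin (x - PI) <> 0) by (apply sin_neq0_neg; lra).
  assert (s : sin (2 * x) <> 0) by (apply sin_neq0_pos; lra).
  unfold cot.
  rewrite !sin_minus, !cos_minus, sin_2a, cos_2a_cos, cos_PI2, sin_PI2,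
    cos_PI, sin_PI in *.
  pose proof (sin2_cos2 x) as E; unfold Rsqr in E.
  split; rational_identity.
Qed.

Lemma cot_sums_3 : cot_sums 3.
Proof.
  intros x Hx. cbn [sum_f_R0 Nat.sub INR] in *.
  replace (1 + 1 + 1) with 3 in * by ring. replace (1 + 1) with 2 by ring.
  replace (x - 1 * PI / 3) with (x - PI / 3) by field.
  replace (x - 3 * PI / 3) with (x - PI) by field.
  pose proof PI_RGT_0.
  assert (s1 : sin (x - PI / 3) <> 0) by (apply sin_neq0_neg; lra).
  assert (s2 : sin (x - 2 * PI / 3) <> 0) by (apply sin_neq0_neg; lra).
  assert (s3 : sin (x - PI) <> 0) by (apply sin_neq0_neg; lra).
  assert (s : sin (3 * x) <> 0) by (apply sin_neq0_pos; lra).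
  unfold cot.
  rewrite !sin_minus, !cos_minus, sin_3a, cos_3a, cos_PI3, sin_PI3,
    cos_2PI3, sin_2PI3, cos_PI, sin_PI in *.
  pose proof (sin2_cos2 x) as E; unfold Rsqr in E.
  assert (R3 : sqrt 3 * sqrt 3 = 3) by (apply sqrt_sqrt; lra).
  split; rational_identity.
Qed.

Lemma sum_f_R0_opp (f : nat -> R) (N : nat) :
  sum_f_R0 (fun i => - f i) N = - sum_f_R0 f N.
Proof.
  induction N as [|N IH]; cbn [sum_f_R0]; [|rewrite IH]; ring.
Qed.

Lemma sumk_double (q : nat) (f : nat -> R) :
  sumk (2 * S q) f = sum_f_R0 (fun j => f (2 * j + 1)%nat + f (2 * j + 2)%nat) q.
Proof.
  unfold sumk. induction q as [|q IH].
  - reflexivity.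
  - replace (2 * S (S q) - 1)%nat with (S (S (2 * S q - 1))) by lia.
    rewrite (tech5 _ (S _)), tech5, IH, (tech5 _ q).
    replace (S (S (2 * S q - 1))) with (2 * S q + 1)%nat by lia.
    replace (S (2 * S q + 1)) with (2 * S q + 2)%nat by lia.
    ring.
Qed.

Lemma sumk_even m1 m2 p (F : nat -> R) : (0 < p)%nat ->
  sumk (2 * p) (fun k => INR (mult m1 m2 k) * F k)
  = INR m1 * sum_f_R0 (fun j => F (2 * j + 1)%nat) (p - 1)
    + INR m2 * sum_f_R0 (fun j => F (2 * j + 2)%nat) (p - 1).
Proof.
  intros Hp. destruct p as [|q]; [lia|].
  rewrite sumk_double, !scal_sum, <- plus_sum.
  replace (S q - 1)%nat with q by lia.
  apply sum_eq. intros j _. unfold mult.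
  replace (2 * j + 2)%nat with (2 * S j)%nat by lia.
  rewrite Nat.odd_odd, Nat.odd_even. ring.
Qed.

Lemma sumk_odd m p (F : nat -> R) :
  sumk p (fun k => INR (mult m m k) * F k)
  = INR m * sum_f_R0 (fun j => F (S j)) (p - 1).
Proof.
  unfold sumk. rewrite scal_sum. apply sum_eq. intros j _.
  unfold mult. destruct (Nat.odd (S j)); ring.
Qed.

Lemma nuS_expi th : nuS (expi th) = (- sin th, cos th).
Proof.
  unfold nuS, expi, normsq, inner, vscale, rot; cbn [fst snd].
  replace (cos th * cos th + sin th * sin th) with 1
    by (pose proof (sin2_cos2 th); unfold Rsqr in *; lra).
  rewrite sqrt_1, Rinv_1, !Rmult_1_l. reflexivity.
Qed.

(* Holds without any range condition on [th]: both sides vanish when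
   [sin (th - k pi / g) = 0], because [/ 0 = 0]. *)
Lemma lamS_expi g k th : lamS g (expi th) k = - cot (th - INR k * PI / INR g).
Proof.
  unfold lamS, alpha, theta_k. rewrite nuS_expi.
  set (b := INR k * PI / INR g).
  unfold inner, vscale, expi, cot; cbn [fst snd].
  rewrite !cos_minus, !sin_minus, cos_PI2, sin_PI2.
  replace (cos th * (cos b * 0 + sin b * 1) + sin th * (sin b * 0 - cos b * 1))
    with (- (sin th * cos b - cos th * sin b)) by ring.
  rewrite Rinv_opp. unfold Rdiv. ring.
Qed.

Lemma lamS_expi_double p th j : (0 < p)%nat ->
  lamS (2 * p) (expi th) (2 * j + 1)
    = - cot (th + PI / (2 * INR p) - INR (S j) * PI / INR p) /\
  lamS (2 * p) (expi th) (2 * j + 2) = - cot (th - INR (S j) * PI / INR p).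
Proof.
  intros Hp. assert (INR p <> 0) by (apply not_0_INR; lia).
  rewrite !lamS_expi, !plus_INR, !mult_INR, (S_INR j), INR_1.
  simpl (INR 2). split; do 2 f_equal; field; assumption.
Qed.

Definition traceS (g m1 m2 : nat) (x : vec) : R :=
  sumk g (fun k => INR (mult m1 m2 k) * lamS g x k).

Lemma fst_HS_expi g m1 m2 th :
  fst (HS g m1 m2 (expi th)) = - traceS g m1 m2 (expi th) * sin th.
Proof. unfold HS. rewrite nuS_expi. cbn. fold (traceS g m1 m2 (expi th)). ring. Qed.

Lemma normsq_HS_expi g m1 m2 th :
  normsq (HS g m1 m2 (expi th)) = traceS g m1 m2 (expi th) ^ 2.
Proof.
  unfold HS. rewrite nuS_expi. fold (traceS g m1 m2 (expi th)).
  unfold normsq, inner, vscale; cbn [fst snd].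
  pose proof (sin2_cos2 th) as E; unfold Rsqr in E. polynomial_identity.
Qed.

Definition curvature_identities (g m1 m2 : nat) (th : R) : Prop :=
  traceS g m1 m2 (expi th) * sin (INR g * th)
    = - INR g / 2 * ((INR m1 + INR m2) * cos (INR g * th) + INR m2 - INR m1) /\
  normA2S g m1 m2 (expi th) * sin (INR g * th) ^ 2
    = INR g ^ 2 / 2 * (INR m1 * (1 - cos (INR g * th)) + INR m2 * (1 + cos (INR g * th)))
      - INR g / 2 * (INR m1 + INR m2) * sin (INR g * th) ^ 2.

(* For [g = 2 p] the indices [2 j + 1] and [2 j + 2] give the cotangent sums of
   order [p] at [th + pi / g] and at [th]. *)
Lemma curvature_identities_even p m1 m2 th :
  (0 < p)%nat -> cot_sums p -> 0 < th < PI / INR (2 * p) ->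
  curvature_identities (2 * p) m1 m2 th.
Proof.
  intros Hp Hcot Hth. pose proof PI_RGT_0.
  assert (HP : 0 < INR p) by (apply lt_0_INR; lia).
  assert (H2p : INR (2 * p) = 2 * INR p) by (rewrite mult_INR; simpl; ring).
  pose proof (mul_in_0_PI (2 * p) th ltac:(lia) Hth) as Hu. rewrite H2p in Hth, Hu.
  assert (Hq : 0 < PI / (2 * INR p)) by (apply Rdiv_lt_0_compat; lra).
  assert (Hhalf : PI / INR p = PI / (2 * INR p) + PI / (2 * INR p)) by (field; lra).
  destruct (Hcot (th + PI / (2 * INR p))) as [T1 Q1]; [lra|].
  destruct (Hcot th) as [T2 Q2]; [lra|].
  pose proof (fun j => proj1 (lamS_expi_double p th j Hp)) as lam_odd.
  pose proof (fun j => proj2 (lamS_expi_double p th j Hp)) as lam_even.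
  unfold curvature_identities, traceS, normA2S.
  rewrite (sumk_even m1 m2 p (fun k => lamS (2 * p) (expi th) k)),
    (sumk_even m1 m2 p (fun k => lamS (2 * p) (expi th) k ^ 2)) by exact Hp.
  rewrite (sum_eq _ _ _ (fun j _ => lam_odd j)), (sum_eq _ _ _ (fun j _ => lam_even j)),
    !sum_f_R0_opp, T1, T2.
  rewrite (sum_eq _ (fun j => cot (th + PI / (2 * INR p) - INR (S j) * PI / INR p) ^ 2))
    by (intros j _; rewrite lam_odd; ring).
  rewrite Q1, (sum_eq _ (fun j => cot (th - INR (S j) * PI / INR p) ^ 2))
    by (intros j _; rewrite lam_even; ring).
  rewrite Q2, H2p.
  replace (INR p * (th + PI / (2 * INR p))) with (PI / 2 + INR p * th) by (field; lra).
  replace (2 * INR p * th) with (2 * (INR p * th)) in Hu |- * by ring.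
  set (u := INR p * th) in *. clearbody u.
  assert (su : sin u <> 0) by (apply sin_neq0_pos; lra).
  assert (cu : cos u <> 0) by (apply Rgt_not_eq, cos_gt_0; lra).
  unfold cot.
  rewrite <- cos_sin, cos_PI2_plus, sin_2a, cos_2a_cos.
  pose proof (sin2_cos2 u) as E; unfold Rsqr in E.
  split; rational_identity.
Qed.

Lemma curvature_identities_odd p m th :
  (0 < p)%nat -> cot_sums p -> 0 < th < PI / INR p ->
  curvature_identities p m m th.
Proof.
  intros Hp Hcot Hth.
  pose proof (mul_in_0_PI p th Hp Hth) as Hu.
  destruct (Hcot th Hth) as [T Q].
  unfold curvature_identities, traceS, normA2S.
  rewrite (sumk_odd m p (fun k => lamS p (expi th) k)),
    (sumk_odd m p (fun k => lamS p (expi th) k ^ 2)).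
  rewrite (sum_eq _ _ _ (fun j _ => lamS_expi p (S j) th)), sum_f_R0_opp, T.
  rewrite (sum_eq _ (fun j => cot (th - INR (S j) * PI / INR p) ^ 2))
    by (intros j _; rewrite lamS_expi; ring).
  rewrite Q.
  assert (su : sin (INR p * th) <> 0) by (apply sin_neq0_pos; lra).
  unfold cot.
  pose proof (sin2_cos2 (INR p * th)) as E; unfold Rsqr in E.
  split; rational_identity.
Qed.

Lemma curvature_identities_iso g m1 m2 n th :
  iso_data g m1 m2 n -> 0 < th < PI / INR g -> curvature_identities g m1 m2 th.
Proof.
  intros [Hg [_ [_ [Hodd _]]]] Hth.
  destruct Hg as [-> | [-> | [-> | [-> | ->]]]].
  - rewrite (Hodd eq_refl) in *. apply curvature_identities_odd; auto using cot_sums_1.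
  - apply (curvature_identities_even 1); auto using cot_sums_1.
  - rewrite (Hodd eq_refl) in *. apply curvature_identities_odd; auto using cot_sums_3.
  - apply (curvature_identities_even 2); auto using cot_sums_2.
  - apply (curvature_identities_even 3); auto using cot_sums_3.
Qed.

Lemma INR_n_iso g m1 m2 n :
  iso_data g m1 m2 n -> INR n = INR g * (INR m1 + INR m2) / 2.
Proof.
  intros [_ [_ [_ [_ He]]]]. apply (f_equal INR) in He.
  rewrite !mult_INR, plus_INR in He. simpl (INR 2) in He. lra.
Qed.

Lemma delta_iso g m1 m2 n :
  iso_data g m1 m2 n -> delta g m1 m2 = (INR m2 - INR m1) / (INR m2 + INR m1).
Proof.
  intros [Hg [_ [_ [Hodd _]]]]. unfold delta.
  destruct Hg as [-> | [-> | [-> | [-> | ->]]]]; try reflexivity.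
  rewrite (Hodd eq_refl), Rminus_diag. unfold Rdiv. rewrite Rmult_0_l. reflexivity.
Qed.

Lemma traceS_mul_sin g m1 m2 n th : iso_data g m1 m2 n -> 0 < th < PI / INR g ->
  traceS g m1 m2 (expi th) * sin (INR g * th)
  = - INR n * (cos (INR g * th) + delta g m1 m2).
Proof.
  intros Hiso Hth. destruct (curvature_identities_iso _ _ _ _ _ Hiso Hth) as [T _].
  assert (1 <= INR m1) by (apply (le_INR 1); apply Hiso). pose proof (pos_INR m2).
  rewrite T, (INR_n_iso _ _ _ _ Hiso), (delta_iso _ _ _ _ Hiso). field. lra.
Qed.

Lemma normA2S_mul_sin2 g m1 m2 n th : iso_data g m1 m2 n -> 0 < th < PI / INR g ->
  normA2S g m1 m2 (expi th) * sin (INR g * th) ^ 2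
  = INR n * (INR g * (1 + delta g m1 m2 * cos (INR g * th)) - sin (INR g * th) ^ 2).
Proof.
  intros Hiso Hth. destruct (curvature_identities_iso _ _ _ _ _ Hiso Hth) as [_ Q].
  assert (1 <= INR m1) by (apply (le_INR 1); apply Hiso). pose proof (pos_INR m2).
  rewrite Q, (INR_n_iso _ _ _ _ Hiso), (delta_iso _ _ _ _ Hiso). field. lra.
Qed.

Lemma iso_data_g_pos g m1 m2 n : iso_data g m1 m2 n -> (0 < g)%nat.
Proof. intros [Hg _]. lia. Qed.

Lemma INR_n_pos g m1 m2 n : iso_data g m1 m2 n -> 0 < INR n.
Proof.
  intros Hiso. rewrite (INR_n_iso _ _ _ _ Hiso).
  assert (0 < INR g) by (apply lt_0_INR, (iso_data_g_pos _ _ _ _ Hiso)).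
  assert (1 <= INR m1) by (apply (le_INR 1); apply Hiso). pose proof (pos_INR m2).
  apply Rdiv_lt_0_compat; nra.
Qed.

Lemma delta_nonneg g m1 m2 n : iso_data g m1 m2 n -> 0 <= delta g m1 m2.
Proof.
  intros Hiso. rewrite (delta_iso _ _ _ _ Hiso).
  assert (1 <= INR m1) by (apply (le_INR 1); apply Hiso).
  assert (INR m1 <= INR m2) by (apply le_INR; apply Hiso).
  apply Rle_mult_inv_pos; lra.
Qed.

Lemma normA2S_lt g m1 m2 n th : iso_data g m1 m2 n -> 0 < th < PI / INR g ->
  cos (INR g * th) + delta g m1 m2 <> 0 ->
  normA2S g m1 m2 (expi th)
  < INR g * (1 + delta g m1 m2) / (INR n * (cos (INR g * th) + delta g m1 m2) ^ 2)
    * normsq (HS g m1 m2 (expi th)).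
Proof.
  intros Hiso Hth Hw.
  pose proof (traceS_mul_sin _ _ _ _ _ Hiso Hth) as Hh.
  pose proof (normA2S_mul_sin2 _ _ _ _ _ Hiso Hth) as HA.
  pose proof (INR_n_pos _ _ _ _ Hiso) as HN.
  pose proof (delta_nonneg _ _ _ _ Hiso) as Hd.
  pose proof (mul_in_0_PI g th (iso_data_g_pos _ _ _ _ Hiso) Hth) as Hx.
  assert (Hs : 0 < sin (INR g * th)) by (apply sin_gt_0; apply Hx).
  pose proof (COS_bound (INR g * th)) as Hc.
  assert (HG : 0 < INR g) by (apply lt_0_INR, (iso_data_g_pos _ _ _ _ Hiso)).
  rewrite normsq_HS_expi.
  set (s := sin (INR g * th)) in *. set (c := cos (INR g * th)) in *.
  set (dl := delta g m1 m2) in *.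
  apply (Rmult_lt_reg_r (s ^ 2)); [apply pow_lt; lra|].
  rewrite HA.
  replace (INR g * (1 + dl) / (INR n * (c + dl) ^ 2) * traceS g m1 m2 (expi th) ^ 2 * s ^ 2)
    with (INR g * (1 + dl) / (INR n * (c + dl) ^ 2) * (traceS g m1 m2 (expi th) * s) ^ 2)
    by ring.
  rewrite Hh. replace (INR g * (1 + dl) / (INR n * (c + dl) ^ 2) * (- INR n * (c + dl)) ^ 2)
    with (INR g * INR n * (1 + dl)) by (field; split; lra).
  assert (0 <= INR g * INR n * dl * (1 - c)) by (apply Rmult_le_pos; [apply Rmult_le_pos; nra | lra]).
  assert (0 < INR n * s ^ 2) by (apply Rmult_lt_0_compat; [lra | apply pow_lt; lra]).
  nra.
Qed.

Lemma derivable_pt_lim_acos_cos (th : R -> R) (l t : R) :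
  0 < th t < PI ->
  derivable_pt_lim (fun s => cos (th s)) t (- l * sin (th t)) ->
  derivable_pt_lim (fun s => acos (cos (th s))) t l.
Proof.
  intros Hth Hcos.
  assert (Hs : 0 < sin (th t)) by (apply sin_gt_0; lra).
  assert (Hy : -1 < cos (th t) < 1).
  { pose proof (sin2_cos2 (th t)) as E; unfold Rsqr in E. split; nra. }
  assert (Hacos : derivable_pt_lim acos (cos (th t)) (- 1 / sin (th t))).
  { apply (derive_pt_eq_1 _ _ _ (derivable_pt_acos _ Hy)).
    rewrite derive_pt_acos, <- sin_acos, acos_cos; lra. }
  replace l with (- 1 / sin (th t) * (- l * sin (th t))) by (field; lra).
  exact (derivable_pt_lim_comp _ _ t _ _ Hcos Hacos).
Qed.

Lemma derivable_pt_lim_zero_const (F : R -> R) (a b : R) :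
  a < 0 < b -> (forall x, a < x < b -> derivable_pt_lim F x 0) ->
  forall t, a < t < b -> F t = F 0.
Proof.
  intros Hab HD t Ht.
  destruct (Rtotal_order t 0) as [Hlt | [-> | Hgt]]; [| reflexivity |].
  - destruct (MVT_cor2 F (fun _ => 0) t 0 Hlt) as [c [Hc _]];
      [intros c Hc; apply HD; lra | lra].
  - destruct (MVT_cor2 F (fun _ => 0) 0 t Hgt) as [c [Hc _]];
      [intros c Hc; apply HD; lra | lra].
Qed.

(* [th' = h] with [h sin (G th) = - N (cos (G th) + D)] is separable:
   [d/dt (cos (G th) + D) = G N (cos (G th) + D)]. *)
Lemma cos_plus_const_exp (G N D a b : R) (th h : R -> R) :
  a < 0 < b ->
  (forall s, a < s < b ->
     derivable_pt_lim th s (h s) /\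
     h s * sin (G * th s) = - N * (cos (G * th s) + D)) ->
  forall t, a < t < b -> cos (G * th t) + D = (cos (G * th 0) + D) * exp (G * N * t).
Proof.
  intros Hab Hsol t Ht.
  set (F := fun s => (cos (G * th s) + D) * exp (- (G * N) * s)).
  assert (HF : forall s, a < s < b -> derivable_pt_lim F s 0).
  { intros s Hs. destruct (Hsol s Hs) as [Hth Hh].
    pose proof (derivable_pt_lim_scal _ G s _ Hth) as D1.
    pose proof (derivable_pt_lim_comp _ cos s _ _ D1 (derivable_pt_lim_cos _)) as D2.
    pose proof (derivable_pt_lim_plus _ _ s _ _ D2 (derivable_pt_lim_const D s)) as D3.
    pose proof (derivable_pt_lim_scal _ (- (G * N)) s _ (derivable_pt_lim_id s)) as D4.
    pose proof (derivable_pt_lim_comp _ exp s _ _ D4 (derivable_pt_lim_exp _)) as D5.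
    pose proof (derivable_pt_lim_mult _ _ s _ _ D3 D5) as D6.
    unfold mult_fct, plus_fct, comp, mult_real_fct, fct_cte, id in D6.
    replace 0 with ((- sin (G * th s) * (G * h s) + 0) * exp (- (G * N) * s)
                    + (cos (G * th s) + D) * (exp (- (G * N) * s) * (- (G * N) * 1))).
    - exact D6.
    - replace (- sin (G * th s) * (G * h s)) with (- G * (h s * sin (G * th s))) by ring.
      rewrite Hh. ring. }
  pose proof (derivable_pt_lim_zero_const F a b Hab HF t Ht) as Hconst.
  unfold F in Hconst. rewrite Rmult_0_r, exp_0, Rmult_1_r in Hconst.
  rewrite <- Hconst, Rmult_assoc, <- exp_plus.
  replace (- (G * N) * t + G * N * t) with 0 by ring. rewrite exp_0. ring.
Qed.

Lemma cos_mul_inj g x y : (0 < g)%nat ->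
  0 < x < PI / INR g -> 0 < y < PI / INR g -> cos (INR g * x) = cos (INR g * y) -> x = y.
Proof.
  intros Hg Hx Hy Hc. pose proof (mul_in_0_PI g x Hg Hx). pose proof (mul_in_0_PI g y Hg Hy).
  apply (Rmult_eq_reg_l (INR g)); [apply cos_inj; lra | apply not_0_INR; lia].
Qed.

Lemma cos_plus_delta_along_flow g m1 m2 n (a b : R) (theta : R -> R) :
  iso_data g m1 m2 n -> a < 0 < b ->
  (forall s, a < s < b ->
     0 < theta s < PI / INR g /\
     derivable_pt_lim (fun u => cos (theta u)) s (fst (HS g m1 m2 (expi (theta s))))) ->
  forall t, a < t < b ->
    cos (INR g * theta t) + delta g m1 m2
    = (cos (INR g * theta 0) + delta g m1 m2) * exp (INR g * INR n * t).
Proof.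
  intros Hiso Hab Hflow t Ht.
  pose proof (iso_data_g_pos _ _ _ _ Hiso) as Hg.
  assert (Hrange : forall s, a < s < b -> 0 < theta s < PI).
  { intros s Hs. pose proof (mul_in_0_PI g _ Hg (proj1 (Hflow s Hs))).
    assert (1 <= INR g) by (apply (le_INR 1); lia). split; nra. }
  (* Only [cos theta] is known to be differentiable; [acos (cos theta)] is a
     copy of [theta] whose derivative can be computed. *)
  set (Theta := fun s => acos (cos (theta s))).
  assert (HTheta : forall s, a < s < b -> Theta s = theta s)
    by (intros s Hs; apply acos_cos; pose proof (Hrange s Hs); lra).
  assert (Hsol : forall s, a < s < b ->
            derivable_pt_lim Theta s (traceS g m1 m2 (expi (theta s))) /\
            traceS g m1 m2 (expi (theta s)) * sin (INR g * Theta s)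
            = - INR n * (cos (INR g * Theta s) + delta g m1 m2)).
  { intros s Hs. destruct (Hflow s Hs) as [Hth Hcos]. rewrite fst_HS_expi in Hcos.
    split; [exact (derivable_pt_lim_acos_cos _ _ _ (Hrange s Hs) Hcos)|].
    rewrite HTheta by exact Hs. exact (traceS_mul_sin _ _ _ _ _ Hiso Hth). }
  pose proof (cos_plus_const_exp _ _ _ a b Theta _ Hab Hsol t Ht) as Hcons.
  rewrite !HTheta in Hcons by (assumption || lra). exact Hcons.
Qed.

Theorem corollary4p12 (g m1 m2 n : nat) (thmin th0 a b : R) (theta : R -> R) :
  iso_data g m1 m2 n ->
  0 < thmin < PI / INR g ->
  cos (INR g * thmin) = - delta g m1 m2 ->
  a < 0 < b ->
  (forall t, a < t < b ->
     0 < theta t < PI / INR g /\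
     derivable_pt_lim (fun s => fst (expi (theta s))) t
       (fst (HS g m1 m2 (expi (theta t)))) /\
     derivable_pt_lim (fun s => snd (expi (theta s))) t
       (snd (HS g m1 m2 (expi (theta t))))) ->
  theta 0 = th0 ->
  th0 <> thmin ->
  forall t, a < t < b ->
    normA2S g m1 m2 (expi (theta t)) <
      INR g * (1 + delta g m1 m2) /
        (INR n * (cos (INR g * th0) + delta g m1 m2) ^ 2)
      * exp (- 2 * INR g * INR n * t)
      * normsq (HS g m1 m2 (expi (theta t))).
Proof.
  intros Hiso Hmin Hcmin Hab Hflow H0 Hne t Ht.
  assert (Hcons := cos_plus_delta_along_flow g m1 m2 n a b theta Hiso Hab
                     (fun s Hs => conj (proj1 (Hflow s Hs)) (proj1 (proj2 (Hflow s Hs)))) t Ht).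
  rewrite H0 in Hcons.
  assert (Hw0 : cos (INR g * th0) + delta g m1 m2 <> 0).
  { intros Hz. apply Hne, (cos_mul_inj g); [exact (iso_data_g_pos _ _ _ _ Hiso) | | exact Hmin | lra].
    rewrite <- H0. apply Hflow. lra. }
  replace (INR g * (1 + delta g m1 m2) / (INR n * (cos (INR g * th0) + delta g m1 m2) ^ 2)
           * exp (- 2 * INR g * INR n * t))
    with (INR g * (1 + delta g m1 m2) / (INR n * (cos (INR g * theta t) + delta g m1 m2) ^ 2)).
  - apply normA2S_lt with (1 := Hiso); [apply Hflow, Ht |].
    rewrite Hcons. apply Rmult_integral_contrapositive; split; [exact Hw0 | apply exp_neq_0].
  - pose proof (INR_n_pos _ _ _ _ Hiso). pose proof (exp_pos (INR g * INR n * t)).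
    replace (- 2 * INR g * INR n * t) with (- (INR g * INR n * t + INR g * INR n * t))
      by ring.
    rewrite Hcons, exp_Ropp, exp_plus. field. split; lra.
Qed.
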